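(* Let $\Lambda=(\lambda_i)_{i=0}^\infty$ be a strictly increasing sequence of non-negative reals with $\lambda_0=0$ and $\sum_{i=1}^\infty 1/\lambda_i<\infty$, and let $M(\Lambda)=\overline{\operatorname{span}}\{t^{\lambda_i}: i\geq 0\}\subseteq C[0,1]$ with the sup-norm. Then $M(\Lambda)$ is not almost square.
   Context: $C[0,1]$ is the space of real-valued continuous functions on $[0,1]$ with the sup-norm. A Banach space $X$ with closed unit ball $B_X$ and unit sphere $S_X$ is almost square if for every finite collection $x_1,\dots,x_k\in S_X$ there exists a sequence $(y_n)$ in $B_X$ such that $\|y_n\|\to 1$ and $\|x_i\pm y_n\|\to 1$ for every $i\in\{1,\dots,k\}$. *)

From HB Require Import structures.
From mathcomp Require Import all_boot all_order all_algebra.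
From mathcomp Require Import all_classical all_reals all_analysis.
Set Implicit Arguments. Unset Strict Implicit. Unset Printing Implicit Defensive.
Import Order.TTheory GRing.Theory Num.Theory.
Import numFieldNormedType.Exports.
Local Open Scope classical_set_scope.
Local Open Scope ring_scope.

(* Elements of C[0,1] are represented by functions R -> R continuous on [0,1];
   only their values on [0,1] matter for the norm. *)
Definition C01 {R : realType} : set (R -> R) :=
  [set f : R -> R | {within `[0%R, 1%R], continuous f}].

Definition supnorm {R : realType} (f : R -> R) : R :=
  sup [set `|f t| | t in (`[0%R, 1%R] : set R)].

(* the monomial t |-> t^lam  (powR: 0 `^ 0 = 1, 0 `^ lam = 0 for lam > 0) *)
Definition mono {R : realType} (l : R) : R -> R := fun t => t `^ l.

Definition muntz_span {R : realType} (lam : nat -> R) : set (R -> R) :=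
  [set f | exists (n : nat) (c : 'I_n -> R) (k : 'I_n -> nat),
      f = fun t => \sum_(i < n) c i * mono (lam (k i)) t].

Definition MLambda {R : realType} (lam : nat -> R) : set (R -> R) :=
  [set f | C01 f /\ forall e : R, 0 < e ->
      exists2 g, muntz_span lam g & supnorm (f \- g) < e].

Definition almost_square {R : realType} (X : set (R -> R)) : Prop :=
  forall (k : nat) (x : 'I_k -> R -> R),
    (forall i, X (x i) /\ supnorm (x i) = 1) ->
    exists y : nat -> R -> R,
      (forall n, X (y n) /\ supnorm (y n) <= 1) /\
      (fun n => supnorm (y n)) @ \oo --> (1 : R) /\
      (forall i, (fun n => supnorm (x i \+ y n)) @ \oo --> (1 : R) /\
                 (fun n => supnorm (x i \- y n)) @ \oo --> (1 : R)).

(* The constant function 1 lies in M(Λ) because λ_0 = 0, and in C[0,1] it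
   satisfies max (‖1 + y‖, ‖1 - y‖) = 1 + ‖y‖ for every y.  Hence, if
   ‖1 ± y_n‖ → 1, then ‖y_n‖ → 0, which is incompatible with ‖y_n‖ → 1. *)
From HB Require Import structures.
From mathcomp Require Import all_boot all_order all_algebra.
From mathcomp Require Import all_classical all_reals all_analysis.
From mathcomp Require Import lra.
Import Order.TTheory GRing.Theory Num.Theory.
Import numFieldNormedType.Exports.
Local Open Scope classical_set_scope.
Local Open Scope ring_scope.

Lemma maxr_normDB (R : realDomainType) (x y : R) :
  Num.max `|x + y| `|x - y| = `|x| + `|y|.
Proof.
apply/eqP; rewrite eq_le ge_max ler_normD ler_normB /= le_max !ler_normr.
by case: (lerP 0 x) => hx; case: (lerP 0 y) => hy;
  rewrite ?(ger0_norm hx) ?(ltr0_norm hx) ?(ger0_norm hy) ?(ltr0_norm hy)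
    !opprD opprK [- x + y]addrC lexx ?orbT.
Qed.

Lemma cvg_max {R : realType} {u v : nat -> R} {a b : R} :
  u n @[n --> \oo] --> a -> v n @[n --> \oo] --> b ->
  Num.max (u n) (v n) @[n --> \oo] --> Num.max a b.
Proof.
move=> ua vb.
apply: (@continuous2_cvg _ _ _ _ _ _ _ _ (fun x y : R => Num.max x y) _ _ _ ua vb).
exact: (@max_continuous _ R (a, b)).
Qed.

Section SupNorm.
Variable R : realType.
Implicit Types (f : R -> R) (c M t : R).

(* [supnorm] is a [sup], which is junk for an unbounded set: hence the bound [M]. *)
Lemma ler_supnorm f M t :
  {in `[0, 1], forall s, `|f s| <= M} -> t \in `[0, 1] -> `|f t| <= supnorm f.
Proof.
move=> fM t01; apply: ub_le_sup; last by exists t => //; rewrite inE in t01.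
by exists M => _ [s s01 <-]; apply: fM; rewrite inE.
Qed.

Lemma supnorm_le f M : {in `[0, 1], forall t, `|f t| <= M} -> supnorm f <= M.
Proof.
move=> fM; apply: ge_sup; first by exists `|f 0|, 0; rewrite //= in_itv /= lexx ler01.
by move=> _ [s s01 <-]; apply: fM; rewrite inE.
Qed.

Lemma supnorm_cst c : supnorm (cst c) = `|c|.
Proof.
apply/eqP; rewrite eq_le supnorm_le //=.
have h01 : (0 : R) \in `[0, 1] by rewrite in_itv /= lexx ler01.
exact: (@ler_supnorm _ `|c| 0).
Qed.

Lemma C01_bounded f : C01 f -> exists M, {in `[0, 1], forall t, `|f t| <= M}.
Proof.
move=> fC.
have [a _ fa] := EVT_max (@ler01 R) fC.
have [b _ fb] := EVT_min (@ler01 R) fC.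
exists (`|f a| + `|f b|) => s s01.
have := fa s s01; have := fb s s01.
have := ler_norm (f a); have : - f b <= `|f b| by rewrite -normrN ler_norm.
have := normr_ge0 (f a); have := normr_ge0 (f b).
by rewrite ler_norml; lra.
Qed.

Lemma supnorm_cst_addB c f : C01 f ->
  `|c| + supnorm f <= Num.max (supnorm (cst c \+ f)) (supnorm (cst c \- f)).
Proof.
move=> /C01_bounded [M fM].
rewrite addrC -lerBrDr; apply: supnorm_le => t t01.
rewrite lerBrDr addrC -maxr_normDB.
have cfM : {in `[0, 1], forall s, `|c + f s| <= `|c| + M /\ `|c - f s| <= `|c| + M}.
  move=> s s01; have := fM s s01.
  by split; [apply: le_trans (ler_normD _ _) _ | apply: le_trans (ler_normB _ _) _];
    rewrite lerD2l.
by apply: le_max2; apply: (ler_supnorm _ (`|c| + M)) t01 => s /cfM [].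
Qed.

End SupNorm.

Lemma not_almost_square_cst1 {R : realType} {X : set (R -> R)} :
  X `<=` C01 -> X (cst 1) -> ~ almost_square X.
Proof.
move=> XC X1 XAS.
have X1_unit : X (cst 1) /\ supnorm (cst 1 : R -> R) = 1.
  by rewrite supnorm_cst normr1.
have [y [Xy [y1 ypm]]] := XAS 1%N (fun _ => cst 1) (fun _ => X1_unit).
have [yp ym] := ypm ord0.
have : 1 + 1 <= Num.max 1 1 :> R.
  have lhs : (fun n => 1 + supnorm (y n)) @ \oo --> (1 + 1 : R).
    by apply: cvgD; [exact: cvg_cst | exact: y1].
  apply: (ler_cvg_to lhs (cvg_max yp ym)).
  near=> n; rewrite -[X in X + _](@normr1 R).
  exact: supnorm_cst_addB (XC _ (Xy n).1).
by rewrite maxxx; lra.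
Unshelve. all: by end_near.
Qed.

Lemma MLambda_C01 {R : realType} (lam : nat -> R) : MLambda lam `<=` C01.
Proof. by move=> f []. Qed.

Lemma MLambda_cst1 {R : realType} {lam : nat -> R} :
  lam 0%N = 0 -> MLambda lam (cst 1).
Proof.
move=> lam0; split.
  by apply: continuous_subspaceT => t; exact: cst_continuous.
move=> e e0; exists (cst 1).
  exists 1%N, (fun _ => 1), (fun _ => 0%N).
  by apply: funext => t; rewrite big_ord1 mul1r /mono lam0 powRr0.
have -> : cst 1 \- cst 1 = cst 0 :> (R -> R) by apply/funext => t /=; rewrite subrr.
by rewrite supnorm_cst normr0.
Qed.

Theorem mainTheorem5 (R : realType) (lam : nat -> R) :
  lam 0%N = 0 ->
  (forall i : nat, lam i < lam i.+1) ->
  (\sum_(1 <= i <oo) ((lam i)^-1)%:E < +oo)%E ->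
  ~ almost_square (MLambda lam).
Proof.
move=> lam0 _ _.
exact: not_almost_square_cst1 (MLambda_C01 lam) (MLambda_cst1 lam0).
Qed.
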